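(* Let $\Bbbk$ be a field of characteristic $\neq2$ and $L$ a Lie tri-algebra over $\Bbbk$. Let $L_0=\mathrm{span}\{[a\vdash b]-[a\dashv b],\ [a\vdash b]-[a\perp b]\mid a,b\in L\}$, and let $X=X_0\cup X_1$ (disjoint union) be a linearly ordered basis of $L$ such that $X_0$ is a basis of $L_0$. For $x,y\in X$ let $\mu_\dashv(x,y)$ and $\mu_\perp(x,y)$ denote $[x\dashv y]$ and $[x\perp y]$ written as linear combinations of $X$, and for $\mu=\sum_i\alpha_i z_i$ ($z_i\in X$) put $\dot\mu=\sum_i\alpha_i\dot z_i$. In the free associative algebra $\mathrm{As}\langle X\cup\dot X\rangle$, where $\dot X=\{\dot x\mid x\in X\}$ is a disjoint copy of $X$, order $X\cup\dot X$ by extending the order of $X$ via: $x>y\Rightarrow\dot x>\dot y$, and $\dot x>y$ for all $x,y\in X$; order words by deg-lex order. Then the set of polynomials $$x\ (x\in X_0);\qquad xy-yx-\mu_\dashv(x,y)\ (x,y\in X_1,\ x>y);$$ $$\dot xy-y\dot x-\dot\mu_\dashv(x,y)\ (x\in X,\ y\in X_1);\qquad \dot x\dot y-\dot y\dot x-\dot\mu_\perp(x,y)\ (x,y\in X,\ x>y)$$ is a Gröbner–Shirshov basis in $\mathrm{As}\langle X\cup\dot X\rangle$.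
   Context: A Lie tri-algebra is a vector space with bilinear operations $[\cdot\vdash\cdot]$, $[\cdot\dashv\cdot]$, $[\cdot\perp\cdot]$ such that $[a\dashv b]=-[b\vdash a]$, $[a\perp b]=-[b\perp a]$, $[[x_1\vdash x_2]\vdash x_3]-[x_1\vdash[x_2\vdash x_3]]+[x_2\vdash[x_1\vdash x_3]]=0$, $[[x_1\perp x_2]\vdash x_3]=[[x_1\vdash x_2]\vdash x_3]$, $[[x_1\vdash x_2]\perp x_3]-[x_1\vdash[x_2\perp x_3]]-[[x_1\vdash x_3]\perp x_2]=0$, and $[[x_1\perp x_2]\perp x_3]+[[x_2\perp x_3]\perp x_1]+[[x_3\perp x_1]\perp x_2]=0$. Gröbner–Shirshov basis (associative case): deg-lex order compares words first by length, then lexicographically. For a nonzero polynomial $f$, $\bar f$ is its largest word; $f$ is monic if $\bar f$ has coefficient 1 (all listed polynomials are monic with leading words $x$, $xy$, $\dot xy$, $\dot x\dot y$ respectively). For monic $f,g$: if $\bar f=u\bar g u'$ the composition of inclusion is $(f,g)_w=f-ugu'$ with $w=\bar f$; if $\bar f=uu'$, $\bar g=u'u''$ with $u'$ nonempty and $u,u''$ nonempty, the composition of intersection is $(f,g)_w=fu''-ug$ with $w=uu'u''$. A set $S$ of monic polynomials is a Gröbner–Shirshov basis if every composition $(f,g)_w$ of elements $f,g\in S$ can be written as $\sum_i\alpha_i u_is_iu_i'$ with $s_i\in S$, $\alpha_i\in\Bbbk$, words $u_i,u_i'$, and $u_i\bar s_iu_i'<w$. *)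

From mathcomp Require Import all_boot all_order all_algebra.
Set Implicit Arguments. Unset Strict Implicit. Unset Printing Implicit Defensive.
Import Order.TTheory GRing.Theory.
Local Open Scope ring_scope.

Fixpoint allP {T : Type} (P : T -> Prop) (s : seq T) : Prop :=
  match s with [::] => True | x :: s' => P x /\ allP P s' end.

Section LieTri.
Variables (k : fieldType) (L : lmodType k).

Definition bilinear (op : L -> L -> L) : Prop :=
  (forall (a : k) x y z, op (a *: x + y) z = a *: op x z + op y z) /\
  (forall (a : k) x y z, op z (a *: x + y) = a *: op z x + op z y).

(* vd = [. |- .], dv = [. -| .], pp = [. _|_ .] *)
Definition is_lie_trialgebra (vd dv pp : L -> L -> L) : Prop :=
  [/\ bilinear vd, bilinear dv & bilinear pp] /\
  [/\ (forall a b, dv a b = - vd b a),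
      (forall a b, pp a b = - pp b a) &
      (forall x1 x2 x3, vd (vd x1 x2) x3 - vd x1 (vd x2 x3) + vd x2 (vd x1 x3) = 0)] /\
  [/\ (forall x1 x2 x3, vd (pp x1 x2) x3 = vd (vd x1 x2) x3),
      (forall x1 x2 x3, pp (vd x1 x2) x3 - vd x1 (pp x2 x3) - pp (vd x1 x3) x2 = 0) &
      (forall x1 x2 x3, pp (pp x1 x2) x3 + pp (pp x2 x3) x1 + pp (pp x3 x1) x2 = 0)].

Definition in_L0 (vd dv pp : L -> L -> L) (v : L) : Prop :=
  exists s : seq (k * k * L * L),
    v = \sum_(t <- s) (t.1.1.1 *: (vd t.1.2 t.2 - dv t.1.2 t.2)
                       + t.1.1.2 *: (vd t.1.2 t.2 - pp t.1.2 t.2)).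

Variable (X : eqType) (e : X -> L).

Definition is_basis_of (P : L -> Prop) (B : pred X) : Prop :=
  [/\ (forall x, B x -> P (e x)),
      (forall (s : seq X) (c : X -> k), uniq s -> all B s ->
          \sum_(z <- s) c z *: e z = 0 -> forall z, z \in s -> c z = 0) &
      (forall v, P v -> exists (s : seq X) (c : X -> k),
          all B s /\ v = \sum_(z <- s) c z *: e z)].

Definition coords (c : X -> k) (v : L) : Prop :=
  exists s : seq X, [/\ uniq s, (forall z, z \notin s -> c z = 0) &
                        v = \sum_(z <- s) c z *: e z].
End LieTri.

Section FreeAs.
Variables (k : fieldType) (d : Order.disp_t) (X : orderType d).

(* letters: inl x = x, inr x = xdot *)
Definition letter := (X + X)%type.
Definition word := seq letter.
Definition poly := word -> k.

Definition letter_lt (a b : letter) : bool :=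
  match a, b with
  | inl x, inl y => (x < y)%O
  | inr x, inr y => (x < y)%O
  | inl _, inr _ => true
  | inr _, inl _ => false
  end.

Fixpoint lexlt (u v : word) : bool :=
  match u, v with
  | a :: u', b :: v' => letter_lt a b || ((a == b) && lexlt u' v')
  | _, _ => false
  end.

Definition wlt (u v : word) : bool :=
  (size u < size v)%N || ((size u == size v) && lexlt u v).

Definition padd (f g : poly) : poly := fun w => f w + g w.
Definition psub (f g : poly) : poly := fun w => f w - g w.
Definition pword (u : word) : poly := fun w => (w == u)%:R.
(* u * f * u' for words u, u' *)
Definition pmulw (u : word) (f : poly) (u' : word) : poly := fun w =>
  if [&& (size u + size u' <= size w)%N, take (size u) w == u &
         drop (size w - size u') w == u']
  then f (drop (size u) (take (size w - size u') w)) else 0.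

(* mu = sum_z c z z (dot = false) or mudot = sum_z c z zdot (dot = true) *)
Definition plin (dot : bool) (c : X -> k) : poly := fun w =>
  match w with
  | [:: inl z] => if dot then 0 else c z
  | [:: inr z] => if dot then c z else 0
  | _ => 0
  end.

Definition lead (f : poly) (w : word) : Prop :=
  f w != 0 /\ (forall w', f w' != 0 -> w' = w \/ wlt w' w).
Definition monic (f : poly) : Prop := exists w, lead f w /\ f w = 1.

Record summand := Summand { s_coef : k; s_left : word; s_poly : poly;
                            s_lead : word; s_right : word }.

Definition trivial_mod (S : poly -> Prop) (h : poly) (w : word) : Prop :=
  exists l : seq summand,
    allP (fun t => [/\ S (s_poly t), lead (s_poly t) (s_lead t) &
                      wlt (s_left t ++ s_lead t ++ s_right t) w]) l /\
    h = (fun v => \sum_(t <- l) s_coef t * pmulw (s_left t) (s_poly t) (s_right t) v).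

Definition is_GSB (S : poly -> Prop) : Prop :=
  (forall f, S f -> monic f) /\
  (forall f g wf wg, S f -> S g -> lead f wf -> lead g wg ->
     (forall u u', wf = u ++ wg ++ u' ->
        trivial_mod S (psub f (pmulw u g u')) wf) /\
     (forall a b c, a != [::] -> b != [::] -> c != [::] ->
        wf = a ++ b -> wg = b ++ c ->
        trivial_mod S (psub (pmulw [::] f c) (pmulw a g [::])) (a ++ b ++ c))).
End FreeAs.

Definition thm_set (k : fieldType) (L : lmodType k) (dv pp : L -> L -> L)
  (d : Order.disp_t) (X : orderType d) (e : X -> L) (X0 : pred X)
  (f : poly k X) : Prop :=
  let X1 := fun x => ~~ X0 x in
  (exists x, X0 x /\ f = pword k [:: inl x])
  \/ (exists x y (c : X -> k), [/\ X1 x, X1 y, (y < x)%O, coords e c (dv (e x) (e y)) &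
        f = psub (psub (pword k [:: inl x; inl y]) (pword k [:: inl y; inl x]))
                 (plin false c)])
  \/ (exists x y (c : X -> k), [/\ X1 y, coords e c (dv (e x) (e y)) &
        f = psub (psub (pword k [:: inr x; inl y]) (pword k [:: inl y; inr x]))
                 (plin true c)])
  \/ (exists x y (c : X -> k), [/\ (y < x)%O, coords e c (pp (e x) (e y)) &
        f = psub (psub (pword k [:: inr x; inr y]) (pword k [:: inr y; inr x]))
                 (plin true c)]).

From Pilot Require Import Defs.
From mathcomp Require Import all_boot all_order all_algebra.
From mathcomp Require Import ring zify.
From Stdlib Require Import FunctionalExtensionality ClassicalEpsilon.
Import Order.TTheory GRing.Theory.
Set Implicit Arguments. Unset Strict Implicit. Unset Printing Implicit Defensive.
Local Open Scope ring_scope.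

(** The polynomials of the theorem are the generators [x] ([x \in X0]) and the commutator
    relations [pq - qp - [p,q]] for letters [p > q] of [X ∪ Ẋ] other than the undotted
    letters of [X0].  Their leading words have length at most two, so the only nontrivial
    compositions are the overlaps [pqr] with [p > q > r].  Below any word of length three
    the relation [pq - qp - [p,q]] is trivial for every pair of letters: for [p < q] by
    antisymmetry of the bracket modulo [L0], for a letter of [X0] because [L0 ⊢ L = 0] and
    [L0] is an ideal for [⊣].  Rewriting an overlap with these relations, as in the Lie
    case, leaves the linear polynomial of the Jacobiator of [p, q, r]; one of the four
    Jacobi-type identities of a Lie tri-algebra puts it in [L0] (all letters undotted) or
    makes it vanish.  The characteristic is used only for [[x ⊣ x] \in L0] and
    [[x ⊥ x] = 0]. *)

Section Letters.
Variables (d : Order.disp_t) (X : orderType d).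
Local Notation letter := (letter X).
Local Notation word := (word X).

Definition is_dotted (p : letter) : bool := if p is inr _ then true else false.
Definition letter_base (p : letter) : X := match p with inl x | inr x => x end.
Definition letter_of (dot : bool) (z : X) : letter := if dot then inr z else inl z.

Lemma letter_of_dotted dot z : is_dotted (letter_of dot z) = dot.
Proof. by case: dot. Qed.

Lemma letter_of_base dot z : letter_base (letter_of dot z) = z.
Proof. by case: dot. Qed.

Lemma letter_ltxx (a : letter) : letter_lt a a = false.
Proof. by case: a => x /=; rewrite ltxx. Qed.

Lemma letter_lt_trans (b a c : letter) : letter_lt a b -> letter_lt b c -> letter_lt a c.
Proof. by case: a => x; case: b => y; case: c => z //=; apply: lt_trans. Qed.

Lemma letter_lt_asym (a b : letter) : letter_lt a b -> letter_lt b a -> False.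
Proof. by move=> ab /(letter_lt_trans ab); rewrite letter_ltxx. Qed.

Lemma letter_lt_total (a b : letter) : a != b -> letter_lt a b || letter_lt b a.
Proof. by case: a => x; case: b => y //= neq; apply: lt_total. Qed.

Lemma dotted_max (p q : letter) : letter_lt q p -> is_dotted p || is_dotted q = is_dotted p.
Proof. by case: p => x; case: q. Qed.

Lemma lexlt_asym (u v : word) : lexlt u v -> lexlt v u -> False.
Proof.
elim: u v => [|a u IH] [|b v] //=.
case/orP => [ab|/andP[/eqP <- uv]]; case/orP => [ba|/andP[/eqP ba vu]].
- exact: letter_lt_asym ab ba.
- by rewrite ba letter_ltxx in ab.
- by rewrite letter_ltxx in ba.
- exact: IH uv vu.
Qed.

Lemma wlt_asym (u v : word) : wlt u v -> wlt v u -> False.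
Proof.
rewrite /wlt; case/orP => [uv|/andP[/eqP uv luv]]; case/orP => [vu|/andP[/eqP vu lvu]].
- by have := ltn_trans uv vu; rewrite ltnn.
- by rewrite vu ltnn in uv.
- by rewrite uv ltnn in vu.
- exact: lexlt_asym luv lvu.
Qed.
End Letters.

Lemma cat_size_id (T : Type) (u v u' : seq T) :
  size (u ++ v ++ u') = size v -> u = [::] /\ u' = [::].
Proof. by rewrite !size_cat => h; split; apply: size0nil; lia. Qed.

Lemma cat_nonnil_size (T : eqType) (a b : seq T) :
  a != [::] -> b != [::] -> (1 < size (a ++ b))%N.
Proof. by case: a => // x a _; case: b => // y b _; rewrite /= size_cat addnS. Qed.

Lemma cat_nonnil_pair (T : eqType) (a b : seq T) x y :
  a != [::] -> b != [::] -> a ++ b = [:: x; y] -> a = [:: x] /\ b = [:: y].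
Proof.
case: a => [|a1 [|a2 a]] //= _; first by case: b => [|? [|? ?]] //= _ [-> ->].
by case: b => [|? ?] //= _ [_ _]; case: a.
Qed.

Section Polynomials.
Variables (k : fieldType) (d : Order.disp_t) (X : orderType d).
Local Notation letter := (letter X).
Local Notation word := (word X).
Local Notation poly := (Defs.poly k X).

Lemma lead_uniq (f : poly) w1 w2 : lead f w1 -> lead f w2 -> w1 = w2.
Proof.
move=> [f1 max1] [f2 max2].
case: (max1 _ f2) => [->//|l21]; case: (max2 _ f1) => [->//|l12].
by case: (wlt_asym l21 l12).
Qed.

Lemma pword_lead (u : word) : lead (pword k u) u /\ pword k u u = 1.
Proof.
rewrite /pword eqxx; split=> //; split=> [|w' /=]; first by rewrite eqxx oner_neq0.
by have [->|_] := eqVneq w' u; [left | rewrite mulr0n eqxx].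
Qed.

Lemma pmulwB (u u' : word) (f g : poly) v :
  pmulw u (psub f g) u' v = pmulw u f u' v - pmulw u g u' v.
Proof. by rewrite /pmulw /psub; case: ifP => _ //; rewrite subr0. Qed.

Lemma pmulw_pword (u m u' v : word) : pmulw u (pword k m) u' v = pword k (u ++ m ++ u') v.
Proof.
rewrite /pmulw /pword.
have [->|neq] := eqVneq v (u ++ m ++ u').
  rewrite !size_cat take_size_cat // eqxx addnA addnK leq_add2r leq_addr.
  by rewrite catA drop_size_cat ?size_cat // eqxx /= take_size_cat ?size_cat // drop_size_cat // eqxx.
case: ifP => // /and3P[hs /eqP ht /eqP hd].
case: eqP => // hm; case/eqP: neq.
rewrite -[v in LHS](cat_take_drop (size v - size u')) hd.
rewrite -[take _ v](cat_take_drop (size u)) take_takel ?ht ?hm ?catA //.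
by rewrite leq_subRL ?(leq_trans (leq_addl _ _) hs) // addnC.
Qed.

Lemma pmulw_nil (f : poly) v : pmulw [::] f [::] v = f v.
Proof. by rewrite /pmulw /= subn0 take_size drop_size take0 drop0. Qed.

Lemma pmulw_sum (I : Type) (r : seq I) (a : I -> k) (F : I -> poly) u u' v :
  pmulw u (fun w => \sum_(i <- r) a i * F i w) u' v = \sum_(i <- r) a i * pmulw u (F i) u' v.
Proof. by rewrite /pmulw; case: ifP => _ //; rewrite big1 // => i _; rewrite mulr0. Qed.

Lemma plin_size dot (c : X -> k) (w : word) : size w != 1%N -> plin dot c w = 0.
Proof. by case: w => [|[] z [|]] //=; case: dot. Qed.

Definition comm_poly (p q : letter) (m : poly) : poly :=
  psub (psub (pword k [:: p; q]) (pword k [:: q; p])) m.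

Lemma comm_poly_lead p q dot c : letter_lt q p ->
  lead (comm_poly p q (plin dot c)) [:: p; q] /\ comm_poly p q (plin dot c) [:: p; q] = 1.
Proof.
move=> qp; have pq1 : ([:: p; q] == [:: q; p]) = false.
  by rewrite eqseq_cons; case: eqP => // pq; rewrite pq letter_ltxx in qp.
have pq_coef : comm_poly p q (plin dot c) [:: p; q] = 1.
  by rewrite /comm_poly /psub /pword eqxx pq1 plin_size // !subr0.
split=> //; split=> [|w]; first by rewrite pq_coef oner_neq0.
case: (ltnP (size w) 2) => [small|]; first by right; rewrite /wlt small.
move=> large; rewrite /comm_poly /psub /pword plin_size ?subr0; last first.
  by apply: contraTneq large => ->.
have [->|n1] := eqVneq w [:: p; q]; first by left.
have [->|n2] := eqVneq w [:: q; p]; last by rewrite subrr eqxx.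
by right; rewrite /wlt /= qp.
Qed.

Lemma comm_poly_overlap (A B C : letter) (mAB mAC mBC : poly) v :
  psub (pmulw [::] (comm_poly A B mAB) [:: C]) (pmulw [:: A] (comm_poly B C mBC) [::]) v =
  pmulw [::] (comm_poly A C mAC) [:: B] v + pmulw [:: C] (comm_poly A B mAB) [::] v
  - pmulw [:: B] (comm_poly A C mAC) [::] v - pmulw [::] (comm_poly B C mBC) [:: A] v
  + ((pmulw [:: A] mBC [::] v - pmulw [::] mBC [:: A] v)
     + (pmulw [::] mAC [:: B] v - pmulw [:: B] mAC [::] v)
     + (pmulw [:: C] mAB [::] v - pmulw [::] mAB [:: C] v)).
Proof. rewrite /comm_poly /psub !pmulwB !pmulw_pword /= /psub; ring. Qed.

Lemma allP_cat (T : Type) (Q : T -> Prop) s1 s2 : Defs.allP Q s1 -> Defs.allP Q s2 -> Defs.allP Q (s1 ++ s2).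
Proof. by elim: s1 => //= a s IH [h1 h2] h3; split => //; apply: IH. Qed.

Lemma allP_map (T : Type) (Q : T -> Prop) (f : T -> T) s :
  (forall t, Q t -> Q (f t)) -> Defs.allP Q s -> Defs.allP Q (map f s).
Proof. by move=> hf; elim: s => //= a s IH [h1 h2]; split; [apply: hf | apply: IH]. Qed.

Section TrivialMod.
Variables (S : poly -> Prop) (w : word).
Local Notation triv f := (trivial_mod S f w).

Lemma trivial_mod_ext (f g : poly) : (forall v, f v = g v) -> triv f -> triv g.
Proof. by move=> fg; rewrite (functional_extensionality f g fg). Qed.

Lemma trivial_mod_eq0 (f : poly) : (forall v, f v = 0) -> triv f.
Proof.
move=> f0; exists [::]; split=> //.
by apply: functional_extensionality => v; rewrite big_nil.
Qed.

Lemma trivial_modD (f g : poly) : triv f -> triv g -> triv (fun v => f v + g v).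
Proof.
move=> [l1 [a1 ->]] [l2 [a2 ->]]; exists (l1 ++ l2); split; first exact: allP_cat.
by apply: functional_extensionality => v; rewrite big_cat.
Qed.

Lemma trivial_modZ a (f : poly) : triv f -> triv (fun v => a * f v).
Proof.
move=> [l [al ->]].
exists (map (fun t => Summand (a * s_coef t) (s_left t) (s_poly t) (s_lead t) (s_right t)) l).
split; first exact: allP_map al.
apply: functional_extensionality => v; rewrite big_map mulr_sumr.
by apply: eq_bigr => t _; rewrite /= mulrA.
Qed.

Lemma trivial_modN (f : poly) : triv f -> triv (fun v => - f v).
Proof. by move=> tf; apply: trivial_mod_ext (trivial_modZ (-1) tf) => v; rewrite mulN1r. Qed.

Lemma trivial_modB (f g : poly) : triv f -> triv g -> triv (fun v => f v - g v).
Proof. by move=> tf tg; apply: trivial_modD tf (trivial_modN tg). Qed.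

Lemma trivial_mod_sum (I : Type) (r : seq I) (a : I -> k) (F : I -> poly) :
  (forall i, a i != 0 -> triv (F i)) -> triv (fun v => \sum_(i <- r) a i * F i v).
Proof.
move=> tF; elim: r => [|i r IH]; first by apply: trivial_mod_eq0 => v; rewrite big_nil.
have [ai0|/tF ti] := eqVneq (a i) 0.
  by apply: trivial_mod_ext IH => v; rewrite big_cons ai0 mul0r add0r.
by apply: trivial_mod_ext (trivial_modD (trivial_modZ (a i) ti) IH) => v; rewrite big_cons.
Qed.

Lemma trivial_mod_summand (f : poly) lf u u' :
  S f -> lead f lf -> wlt (u ++ lf ++ u') w -> triv (pmulw u f u').
Proof.
move=> Sf lead_f small; exists [:: Summand 1 u f lf u']; split=> //.
by apply: functional_extensionality => v; rewrite big_seq1 mul1r.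
Qed.
End TrivialMod.
End Polynomials.

Section Bilinear.
Variables (k : fieldType) (L : lmodType k) (op : L -> L -> L).
Hypothesis op_bilinear : Defs.bilinear op.

Lemma bilin0l z : op 0 z = 0.
Proof.
have h := op_bilinear.1 1 0 0 z; rewrite scale1r addr0 scale1r in h.
by apply: (addrI (op 0 z)); rewrite -h addr0.
Qed.

Lemma bilin0r z : op z 0 = 0.
Proof.
have h := op_bilinear.2 1 0 0 z; rewrite scale1r addr0 scale1r in h.
by apply: (addrI (op z 0)); rewrite -h addr0.
Qed.

Lemma bilinDl x y z : op (x + y) z = op x z + op y z.
Proof. by have := op_bilinear.1 1 x y z; rewrite !scale1r. Qed.

Lemma bilinZl a x z : op (a *: x) z = a *: op x z.
Proof. by have := op_bilinear.1 a x 0 z; rewrite addr0 bilin0l addr0. Qed.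

Lemma bilinZr a x z : op z (a *: x) = a *: op z x.
Proof. by have := op_bilinear.2 a x 0 z; rewrite addr0 bilin0r addr0. Qed.

Lemma bilinNl x z : op (- x) z = - op x z.
Proof. by rewrite -scaleN1r bilinZl scaleN1r. Qed.

Lemma bilinNr x z : op z (- x) = - op z x.
Proof. by rewrite -scaleN1r bilinZr scaleN1r. Qed.

Lemma bilin_suml (I : Type) (r : seq I) (c : I -> k) (F : I -> L) z :
  op (\sum_(i <- r) c i *: F i) z = \sum_(i <- r) c i *: op (F i) z.
Proof. by elim/big_rec2: _ => [|i y1 y2 _ <-]; [exact: bilin0l | exact: op_bilinear.1]. Qed.

Lemma bilin_sumr (I : Type) (r : seq I) (c : I -> k) (F : I -> L) z :
  op z (\sum_(i <- r) c i *: F i) = \sum_(i <- r) c i *: op z (F i).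
Proof. by elim/big_rec2: _ => [|i y1 y2 _ <-]; [exact: bilin0r | exact: op_bilinear.2]. Qed.
End Bilinear.

Section Coordinates.
Variables (k : fieldType) (L : lmodType k) (X : eqType) (e : X -> L).
Hypothesis e_basis : is_basis_of e (fun _ => True) predT.

Lemma sum_supset (V : zmodType) (s u : seq X) (F : X -> V) : uniq s -> uniq u ->
  {subset s <= u} -> (forall z, z \notin s -> F z = 0) ->
  \sum_(z <- u) F z = \sum_(z <- s) F z.
Proof.
move=> us uu su Fs.
rewrite (bigID (mem s)) /= [X in _ + X]big1 ?addr0; last by move=> z /Fs.
rewrite -big_filter; apply/perm_big/uniq_perm; rewrite ?filter_uniq // => z.
by rewrite mem_filter; apply/andP/idP => [[]//|zs]; split=> //; apply: su.
Qed.

Lemma coords_ext (c c' : X -> k) v : c =1 c' -> coords e c v -> coords e c' v.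
Proof.
move=> cc' [s [us cs ->]]; exists s; split=> // [z /cs|]; first by rewrite -cc'.
by apply: eq_bigr => z _; rewrite cc'.
Qed.

Lemma coords0 : coords e (fun _ => 0) 0.
Proof. by exists [::]; rewrite big_nil. Qed.

Lemma coords_e t : coords e (fun y => (t == y)%:R) (e t).
Proof.
exists [:: t]; split=> // [y|]; last by rewrite big_seq1 eqxx scale1r.
by rewrite inE eq_sym => /negPf ->.
Qed.

Lemma coords_lin (c c' : X -> k) a v v' : coords e c v -> coords e c' v' ->
  coords e (fun y => a * c y + c' y) (a *: v + v').
Proof.
move=> [s [us cs ->]] [s' [us' cs' ->]].
have ss' : {subset s <= undup (s ++ s')} by move=> y ys; rewrite mem_undup mem_cat ys.
have s's : {subset s' <= undup (s ++ s')}.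
  by move=> y ys; rewrite mem_undup mem_cat ys orbT.
exists (undup (s ++ s')); split; first exact: undup_uniq.
  by move=> y; rewrite mem_undup mem_cat negb_or => /andP[/cs -> /cs' ->]; rewrite mulr0 addr0.
symmetry; under eq_bigr => y _ do rewrite scalerDl -scalerA.
rewrite big_split /= -scaler_sumr (sum_supset us (undup_uniq _) ss').
  by rewrite (sum_supset us' (undup_uniq _) s's) // => y /cs' ->; rewrite scale0r.
by move=> y /cs ->; rewrite scale0r.
Qed.

Lemma coords_uniq c c' v : coords e c v -> coords e c' v -> c =1 c'.
Proof.
move=> cv c'v z; have [s [us cs vE]] := coords_lin (-1) c'v cv.
rewrite scaleN1r addNr in vE.
case: e_basis => _ indep _; have /indep c0 : all predT s by exact: all_predT.
case: (boolP (z \in s)) => [zs | /cs]; last by move/eqP; rewrite mulN1r addrC subr_eq0 => /eqP.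
by move: (c0 _ us (esym vE) z zs) => /eqP; rewrite mulN1r addrC subr_eq0 => /eqP.
Qed.

Lemma coords_sum (s : seq X) (c : X -> k) :
  coords e (fun y => \sum_(z <- s) c z * (z == y)%:R) (\sum_(z <- s) c z *: e z).
Proof.
elim: s => [|z s IH].
  by rewrite big_nil; apply: coords_ext coords0 => y; rewrite big_nil.
rewrite big_cons; apply: coords_ext (coords_lin (c z) (coords_e z) IH) => y.
by rewrite big_cons.
Qed.

Lemma coords_exists v : exists c, coords e c v.
Proof. by case: e_basis => _ _ /(_ v I) [s [c [_ ->]]]; eexists; apply: coords_sum. Qed.

Definition coordf (v : L) : X -> k :=
  proj1_sig (constructive_indefinite_description _ (coords_exists v)).

Lemma coordfP v : coords e (coordf v) v.
Proof. by rewrite /coordf; case: constructive_indefinite_description. Qed.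

Lemma coordf_lin a v v' : coordf (a *: v + v') =1 (fun y => a * coordf v y + coordf v' y).
Proof. exact: coords_uniq (coordfP _) (coords_lin a (coordfP v) (coordfP v')). Qed.

Lemma coordf0 : coordf 0 =1 (fun _ => 0).
Proof. exact: coords_uniq (coordfP 0) coords0. Qed.

Lemma coordfD v v' : coordf (v + v') =1 (fun y => coordf v y + coordf v' y).
Proof. by move=> y; rewrite -[v]scale1r coordf_lin mul1r scale1r. Qed.

Lemma coordf_e t : coordf (e t) =1 (fun y => (t == y)%:R).
Proof. exact: coords_uniq (coordfP _) (coords_e t). Qed.

Lemma coordf_sum (I : Type) (r : seq I) (a : I -> k) (F : I -> L) :
  coordf (\sum_(i <- r) a i *: F i) =1 (fun y => \sum_(i <- r) a i * coordf (F i) y).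
Proof.
move=> y; elim: r => [|i r IH]; first by rewrite !big_nil coordf0.
by rewrite !big_cons coordf_lin IH.
Qed.
End Coordinates.

Section LieTriAlgebra.
Variables (k : fieldType) (L : lmodType k) (vd dv pp : L -> L -> L).
Hypothesis lie : is_lie_trialgebra vd dv pp.
Local Notation L0 := (in_L0 vd dv pp).

Lemma vd_bilinear : Defs.bilinear vd. Proof. by case: lie => [[]]. Qed.
Lemma dv_bilinear : Defs.bilinear dv. Proof. by case: lie => [[]]. Qed.
Lemma pp_bilinear : Defs.bilinear pp. Proof. by case: lie => [[]]. Qed.

Lemma dvE a b : dv a b = - vd b a. Proof. by case: lie => _ [[]]. Qed.
Lemma ppC a b : pp a b = - pp b a. Proof. by case: lie => _ [[]]. Qed.

Lemma vd_leibniz x y z : vd (vd x y) z = vd x (vd y z) - vd y (vd x z).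
Proof.
case: lie => _ [[_ _ /(_ x y z)/eqP]].
by rewrite -addrA addr_eq0 => /eqP -> _; rewrite opprD opprK.
Qed.

Lemma vd_ppl x y z : vd (pp x y) z = vd (vd x y) z. Proof. by case: lie => _ [_ []]. Qed.

Lemma pp_vd x y z : pp (vd x y) z - vd x (pp y z) - pp (vd x z) y = 0.
Proof. by case: lie => _ [_ []]. Qed.

Lemma pp_jacobi x y z : pp (pp x y) z + pp (pp y z) x + pp (pp z x) y = 0.
Proof. by case: lie => _ [_ []]. Qed.

Lemma L0_0 : L0 0.
Proof. by exists [::]; rewrite big_nil. Qed.

Lemma L0_Z a l : L0 l -> L0 (a *: l).
Proof.
case=> s ->; exists (map (fun t => (a * t.1.1.1, a * t.1.1.2, t.1.2, t.2)) s).
rewrite big_map scaler_sumr; apply: eq_bigr => t _ /=.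
by rewrite scalerDr !scalerA.
Qed.

Lemma L0_vd_dv a b : L0 (vd a b - dv a b).
Proof. by exists [:: (1, 0, a, b)]; rewrite big_seq1 /= scale1r scale0r addr0. Qed.

Lemma vd_L0l l b : L0 l -> vd l b = 0.
Proof.
case=> s ->; elim/big_rec: _ => [|[[[a1 a2] x] y] v _ IH] /=; first exact: (bilin0l vd_bilinear).
have vd_dv : vd (vd x y - dv x y) b = 0.
  rewrite (bilinDl vd_bilinear) dvE !(bilinNl vd_bilinear) opprK !vd_leibniz.
  by rewrite addrA subrK subrr.
have vd_pp : vd (vd x y - pp x y) b = 0.
  by rewrite (bilinDl vd_bilinear) (bilinNl vd_bilinear) vd_ppl subrr.
by rewrite !(bilinDl vd_bilinear) !(bilinZl vd_bilinear) vd_dv vd_pp IH !scaler0 !addr0.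
Qed.

Lemma dv_L0r a l : L0 l -> dv a l = 0.
Proof. by move=> l0; rewrite dvE vd_L0l ?oppr0. Qed.

Lemma dv_L0l l b : L0 l -> L0 (dv l b).
Proof.
move=> l0; have -> : dv l b = -1 *: (vd l b - dv l b) by rewrite vd_L0l // sub0r scaleN1r opprK.
exact/L0_Z/L0_vd_dv.
Qed.

Lemma dv_symm a b : L0 (dv a b + dv b a).
Proof.
have -> : dv a b + dv b a = -1 *: (vd a b - dv a b) by rewrite scaleN1r opprB addrC (dvE b a) addrC.
exact/L0_Z/L0_vd_dv.
Qed.

Lemma pp_symm a b : pp a b + pp b a = 0.
Proof. by rewrite ppC addNr. Qed.

Lemma jacobi_dv_L0 x y z : L0 (dv x (dv y z) + dv (dv x z) y + dv z (dv x y)).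
Proof.
have -> : dv x (dv y z) + dv (dv x z) y + dv z (dv x y) = vd z (vd y x) - dv z (vd y x).
  rewrite !dvE !(bilinNl vd_bilinear, bilinNr vd_bilinear) !opprK.
  by rewrite (vd_leibniz z y x) subrK.
exact: L0_vd_dv.
Qed.

Lemma jacobi_dv x y z : dv x (dv y z) + dv (dv x z) y - dv (dv x y) z = 0.
Proof.
rewrite !dvE !(bilinNl vd_bilinear, bilinNr vd_bilinear) !opprK.
by rewrite (vd_leibniz z y x) subrK subrr.
Qed.

Lemma jacobi_pp_dv x y z : pp x (dv y z) + pp (dv x z) y - dv (pp x y) z = 0.
Proof.
rewrite !dvE !(bilinNl pp_bilinear, bilinNr pp_bilinear) !opprK (ppC x) opprK.
move/eqP: (pp_vd z x y); rewrite subr_eq0 subr_eq => /eqP ->.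
by rewrite opprD addrA subrr sub0r addNr.
Qed.

Lemma jacobi_pp x y z : pp x (pp y z) + pp (pp x z) y + pp z (pp x y) = 0.
Proof.
rewrite (ppC x (pp y z)) (ppC z (pp x y)) (ppC x z) (bilinNl pp_bilinear).
by rewrite -!opprD addrC addrA pp_jacobi oppr0.
Qed.
End LieTriAlgebra.

Section GroebnerShirshov.
Variables (k : fieldType) (L : lmodType k) (vd dv pp : L -> L -> L)
  (d : Order.disp_t) (X : orderType d) (e : X -> L) (X0 : pred X).
Hypothesis char_k : (2%N \notin [pchar k]%R).
Hypothesis lie : is_lie_trialgebra vd dv pp.
Hypothesis e_basis : is_basis_of e (fun _ => True) predT.
Hypothesis e_basis_L0 : is_basis_of e (in_L0 vd dv pp) X0.
Local Notation letter := (letter X).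
Local Notation word := (word X).
Local Notation poly := (Defs.poly k X).
Local Notation L0 := (in_L0 vd dv pp).
Local Notation coord := (coordf e_basis).
Local Notation GS := (thm_set dv pp e X0).

(* The element of L that the relations assign to the commutator of [a] and [b], each dotted
   according to [da], [db]; e.g. [x ẏ - ẏ x] is rewritten to [- (y ⊣ x)^·]. *)
Definition bracket (da : bool) (a : L) (db : bool) (b : L) : L :=
  match da, db with
  | _, false => dv a b
  | false, true => - dv b a
  | true, true => pp a b
  end.

Definition lval (p : letter) : L := e (letter_base p).

Definition letter_bracket (p q : letter) : L :=
  bracket (is_dotted p) (lval p) (is_dotted q) (lval q).

Definition pvec (dot : bool) (v : L) : poly := plin dot (coord v).

Definition rel_poly (p q : letter) : poly :=
  comm_poly p q (pvec (is_dotted p || is_dotted q) (letter_bracket p q)).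

Definition admissible (p : letter) : bool := if p is inl x then ~~ X0 x else true.

(* Exactly what makes [pvec dot v] a combination of the generators [x], [x \in X0]. *)
Definition negligible (dot : bool) (v : L) : Prop := if dot then v = 0 else L0 v.

Definition jacobiator (A B C : letter) : L :=
  bracket (is_dotted A) (lval A) (is_dotted B) (letter_bracket B C)
  + bracket (is_dotted A) (letter_bracket A C) (is_dotted B) (lval B)
  + bracket (is_dotted C) (lval C) (is_dotted A) (letter_bracket A B).

Lemma two_neq0 : (2%:R : k) != 0.
Proof. by move: char_k; rewrite inE. Qed.

Lemma L0_e z : X0 z -> L0 (e z).
Proof. by case: e_basis_L0 => L0e _ _; apply: L0e. Qed.

Lemma L0_coord l z : L0 l -> ~~ X0 z -> coord l z = 0.
Proof.
case: e_basis_L0 => _ _ /[apply] -[s [c [sX0 ->]]] nX0z.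
rewrite coordf_sum big1_seq // => t /andP[_ ts]; rewrite coordf_e.
have [tz|] := eqVneq t z; last by rewrite mulr0.
by move/allP: sX0 => /(_ t ts); rewrite tz (negbTE nX0z).
Qed.

Lemma negligibleZ dot a v : negligible dot v -> negligible dot (a *: v).
Proof. by case: dot => /= [->|]; [rewrite scaler0 | exact: L0_Z]. Qed.

Lemma bracket_sumr da a db (I : Type) (r : seq I) (c : I -> k) (F : I -> L) :
  bracket da a db (\sum_(i <- r) c i *: F i) = \sum_(i <- r) c i *: bracket da a db (F i).
Proof.
case: da; case: db => /=;
  rewrite ?(bilin_sumr (dv_bilinear lie)) ?(bilin_sumr (pp_bilinear lie)) //.
by rewrite (bilin_suml (dv_bilinear lie)) -sumrN; apply: eq_bigr => i _; rewrite scalerN.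
Qed.

Lemma bracket_suml da db b (I : Type) (r : seq I) (c : I -> k) (F : I -> L) :
  bracket da (\sum_(i <- r) c i *: F i) db b = \sum_(i <- r) c i *: bracket da (F i) db b.
Proof.
case: da; case: db => /=;
  rewrite ?(bilin_suml (dv_bilinear lie)) ?(bilin_suml (pp_bilinear lie)) //.
by rewrite (bilin_sumr (dv_bilinear lie)) -sumrN; apply: eq_bigr => i _; rewrite scalerN.
Qed.

Lemma pvec0 dot u : pvec dot 0 u = 0.
Proof. by case: u => [|[] z [|]] //=; case: dot; rewrite // coordf0. Qed.

Lemma pvecD dot v v' u : pvec dot (v + v') u = pvec dot v u + pvec dot v' u.
Proof. by case: u => [|[] z [|]] //=; case: dot; rewrite ?coordfD ?addr0. Qed.

Lemma pvec_sum dot (I : Type) (r : seq I) (c : I -> k) (F : I -> L) :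
  pvec dot (\sum_(i <- r) c i *: F i) = fun u => \sum_(i <- r) c i * pvec dot (F i) u.
Proof.
apply: functional_extensionality => u.
case: u => [|[] z [|]] /=; try case: dot; rewrite ?coordf_sum //;
  by rewrite big1 // => i _; rewrite mulr0.
Qed.

Lemma pvec_e dot z : pvec dot (e z) = pword k [:: letter_of dot z].
Proof.
apply: functional_extensionality => u; rewrite /pword.
case: u => [|[] t [|? ?]]; case: dot => //=.
all: by rewrite ?coordf_e eqseq_cons ?andbF //= andbT eq_sym.
Qed.

Lemma plin_coords dot c v : coords e c v -> plin dot c = pvec dot v.
Proof.
move=> cv; apply: functional_extensionality => u.
by case: u => [|[] z [|]] //=; case: dot; rewrite // (coords_uniq e_basis cv (coordfP _ _)).
Qed.

Lemma rel_poly_lead p q : letter_lt q p ->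
  lead (rel_poly p q) [:: p; q] /\ rel_poly p q [:: p; q] = 1.
Proof. exact: comm_poly_lead. Qed.

Lemma rel_poly_in_set p q : letter_lt q p -> admissible p -> admissible q -> GS (rel_poly p q).
Proof.
case: p => x; case: q => y //= yx ax ay.
- by right; left; exists x, y, (coord (dv (e x) (e y))); split=> //; apply: coordfP.
- by right; right; left; exists x, y, (coord (dv (e x) (e y))); split=> //; apply: coordfP.
- by do 3 right; exists x, y, (coord (pp (e x) (e y))); split=> //; apply: coordfP.
Qed.

Lemma thm_setP f : GS f ->
  (exists2 x, X0 x & f = pword k [:: inl x]) \/
  exists p q, [/\ letter_lt q p, admissible p, admissible q & f = rel_poly p q].
Proof.
case=> [[x [X0x ->]]|[|[]]]; first by left; exists x.
- move=> [x [y [c [ax ay yx cxy ->]]]]; right; exists (inl x), (inl y).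
  by rewrite /rel_poly (plin_coords _ cxy).
- move=> [x [y [c [ay cxy ->]]]]; right; exists (inr x), (inl y).
  by rewrite /rel_poly (plin_coords _ cxy).
- move=> [x [y [c [yx cxy ->]]]]; right; exists (inr x), (inr y).
  by rewrite /rel_poly (plin_coords _ cxy).
Qed.

Lemma thm_set_leadP f w : GS f -> lead f w ->
  (exists2 x, X0 x & f = pword k [:: inl x] /\ w = [:: inl x]) \/
  exists p q, [/\ letter_lt q p, admissible p, admissible q, f = rel_poly p q & w = [:: p; q]].
Proof.
case/thm_setP => [[x X0x ->] lw|[p [q [qp ap aq ->]] lw]].
  by left; exists x => //; split=> //; apply: lead_uniq lw (pword_lead _ _).1.
by right; exists p, q; split=> //; apply: lead_uniq lw (rel_poly_lead qp).1.
Qed.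

Lemma thm_set_monic f : GS f -> Defs.monic f.
Proof.
case/thm_setP => [[x _ ->]|[p [q [qp _ _ ->]]]]; first by exists [:: inl x]; apply: pword_lead.
by exists [:: p; q]; apply: rel_poly_lead.
Qed.

Lemma letter_bracket_inadmissible p q : ~~ (admissible p && admissible q) ->
  negligible (is_dotted p || is_dotted q) (letter_bracket p q).
Proof.
rewrite /letter_bracket /lval; case: p => x; case: q => y //=; rewrite ?andbT ?negb_and ?negbK.
- case/orP => [/L0_e/(dv_L0l lie)//| /L0_e/(dv_L0r lie) ->]; exact: L0_0.
- by move/L0_e/(dv_L0r lie) ->; rewrite oppr0.
- by move/L0_e/(dv_L0r lie) ->.
Qed.

Lemma letter_bracket_symm p q :
  negligible (is_dotted p || is_dotted q) (letter_bracket p q + letter_bracket q p).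
Proof.
case: p => x; case: q => y /=.
- exact: dv_symm.
- by rewrite addNr.
- by rewrite addrN.
- by rewrite /letter_bracket /= (pp_symm lie).
Qed.

Lemma letter_bracket_diag p : negligible (is_dotted p) (letter_bracket p p).
Proof.
have := letter_bracket_symm p p; rewrite orbb => /(negligibleZ 2%:R^-1).
by rewrite -mulr2n -scaler_nat scalerA mulVf ?two_neq0 // scale1r.
Qed.

Lemma jacobiator_negligible A B C : letter_lt B A -> letter_lt C B ->
  negligible (is_dotted A) (jacobiator A B C).
Proof.
rewrite /jacobiator /letter_bracket /lval.
case: A => a; case: B => b; case: C => c //= _ _.
- exact: jacobi_dv_L0.
- exact (jacobi_dv lie _ _ _).
- exact (jacobi_pp_dv lie _ _ _).
- exact (jacobi_pp lie _ _ _).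
Qed.

Section Reduction.
Variable w : word.
Local Notation triv f := (trivial_mod GS f w).

Lemma trivial_mod_rel_summand p q u u' : letter_lt q p -> admissible p -> admissible q ->
  wlt (u ++ [:: p; q] ++ u') w -> triv (pmulw u (rel_poly p q) u').
Proof.
move=> qp ap aq; apply: trivial_mod_summand (rel_poly_in_set qp ap aq) (rel_poly_lead qp).1.
Qed.

Lemma trivial_mod_pword_inadmissible (u : word) : ~~ all admissible u -> (size u < size w)%N ->
  triv (pword k u).
Proof.
case/allPn => -[x|//] /splitPr[u1 u2]; rewrite negbK => X0x small.
have GSx : GS (pword k [:: inl x]) by left; exists x.
have lt_w : wlt (u1 ++ [:: inl x] ++ u2) w by rewrite /wlt small.
apply: trivial_mod_ext (trivial_mod_summand GSx (pword_lead k _).1 lt_w) => v.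
by rewrite pmulw_pword.
Qed.

Hypothesis w_long : (2 < size w)%N.

Lemma trivial_mod_pvec_negligible dot v : negligible dot v -> triv (pvec dot v).
Proof.
case: dot => /= [->|L0v]; first by apply: trivial_mod_eq0 => u; rewrite pvec0.
have [s [_ _ vE]] := coordfP e_basis v; rewrite vE pvec_sum.
apply: trivial_mod_sum => z; rewrite pvec_e /= => cz.
apply: trivial_mod_pword_inadmissible; last exact: ltn_trans w_long.
by rewrite /= andbT negbK; apply: contraNT cz => /(L0_coord L0v) ->.
Qed.

Lemma trivial_mod_rel_poly_lt p q : letter_lt q p -> admissible p -> admissible q ->
  triv (rel_poly p q).
Proof.
move=> qp ap aq; apply: trivial_mod_ext (trivial_mod_rel_summand (u := [::]) (u' := [::]) qp ap aq _).
  by move=> v; rewrite pmulw_nil.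
by rewrite /wlt w_long.
Qed.

Lemma rel_polyC p q u : rel_poly p q u =
  - rel_poly q p u - pvec (is_dotted p || is_dotted q) (letter_bracket p q + letter_bracket q p) u.
Proof. rewrite /rel_poly /comm_poly /psub pvecD [is_dotted q || _]orbC; ring. Qed.

Lemma rel_poly_diag p u : rel_poly p p u = - pvec (is_dotted p) (letter_bracket p p) u.
Proof. by rewrite /rel_poly /comm_poly /psub orbb subrr sub0r. Qed.

Lemma trivial_mod_rel_poly p q : triv (rel_poly p q).
Proof.
have [/andP[ap aq]|inadm] := boolP (admissible p && admissible q); last first.
  have inadm_pq : ~~ all admissible [:: p; q] by rewrite /= andbT.
  have inadm_qp : ~~ all admissible [:: q; p] by rewrite /= andbT andbC.
  apply: trivial_mod_ext (trivial_modB (trivial_modB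
    (trivial_mod_pword_inadmissible inadm_pq w_long) (trivial_mod_pword_inadmissible inadm_qp w_long))
    (trivial_mod_pvec_negligible (letter_bracket_inadmissible inadm))) => v.
  by [].
have [<-|/letter_lt_total/orP[pq|qp]] := eqVneq p q.
- apply: trivial_mod_ext (trivial_modN (trivial_mod_pvec_negligible (letter_bracket_diag p))) => v.
  by rewrite rel_poly_diag.
- apply: trivial_mod_ext (trivial_modB (trivial_modN (trivial_mod_rel_poly_lt pq aq ap))
    (trivial_mod_pvec_negligible (letter_bracket_symm p q))) => v.
  by rewrite [RHS]rel_polyC.
- exact: trivial_mod_rel_poly_lt.
Qed.

Lemma trivial_mod_comm_pvecl A dot v :
  triv (fun u => pmulw [:: A] (pvec dot v) [::] u - pmulw [::] (pvec dot v) [:: A] u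
                 - pvec (is_dotted A || dot) (bracket (is_dotted A) (lval A) dot v) u).
Proof.
have [s [_ _ ->]] := coordfP e_basis v.
apply: trivial_mod_ext (trivial_mod_sum s
  (fun z (_ : coord v z != 0) => trivial_mod_rel_poly A (letter_of dot z))) => u.
rewrite bracket_sumr !pvec_sum !pmulw_sum -!sumrB; apply: eq_bigr => z _.
rewrite pvec_e !pmulw_pword /rel_poly /comm_poly /psub /letter_bracket /lval.
by rewrite letter_of_dotted letter_of_base /=; ring.
Qed.

Lemma trivial_mod_comm_pvecr B dot v :
  triv (fun u => pmulw [::] (pvec dot v) [:: B] u - pmulw [:: B] (pvec dot v) [::] u
                 - pvec (dot || is_dotted B) (bracket dot v (is_dotted B) (lval B)) u).
Proof.
have [s [_ _ ->]] := coordfP e_basis v.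
apply: trivial_mod_ext (trivial_mod_sum s
  (fun z (_ : coord v z != 0) => trivial_mod_rel_poly (letter_of dot z) B)) => u.
rewrite bracket_suml !pvec_sum !pmulw_sum -!sumrB; apply: eq_bigr => z _.
rewrite pvec_e !pmulw_pword /rel_poly /comm_poly /psub /letter_bracket /lval.
by rewrite letter_of_dotted letter_of_base /=; ring.
Qed.
End Reduction.


Lemma trivial_mod_overlap A B C : letter_lt B A -> letter_lt C B ->
  admissible A -> admissible B -> admissible C ->
  trivial_mod GS (psub (pmulw [::] (rel_poly A B) [:: C]) (pmulw [:: A] (rel_poly B C) [::]))
    [:: A; B; C].
Proof.
move=> BA CB aA aB aC; have CA := letter_lt_trans CB BA.
have w3 : (2 < size [:: A; B; C])%N by [].
have t1 := trivial_mod_rel_summand (w := [:: A; B; C]) (u := [::]) (u' := [:: B]) CA aA aC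
  ltac:(by rewrite /wlt /= eqxx CB orbT).
have t2 := trivial_mod_rel_summand (w := [:: A; B; C]) (u := [:: C]) (u' := [::]) BA aA aB
  ltac:(by rewrite /wlt /= CA).
have t3 := trivial_mod_rel_summand (w := [:: A; B; C]) (u := [:: B]) (u' := [::]) CA aA aC
  ltac:(by rewrite /wlt /= BA).
have t4 := trivial_mod_rel_summand (w := [:: A; B; C]) (u := [::]) (u' := [:: A]) CB aB aC
  ltac:(by rewrite /wlt /= BA).
have r1 := trivial_mod_comm_pvecl w3 A (is_dotted B) (letter_bracket B C).
have r2 := trivial_mod_comm_pvecr w3 B (is_dotted A) (letter_bracket A C).
have r3 := trivial_mod_comm_pvecl w3 C (is_dotted A) (letter_bracket A B).
have jac := trivial_mod_pvec_negligible w3 (jacobiator_negligible BA CB).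
rewrite (dotted_max BA) in r1 r2; rewrite orbC (dotted_max CA) in r3.
apply: trivial_mod_ext (trivial_modD (trivial_modD (trivial_modD (trivial_modB (trivial_modB
  (trivial_modD t1 t2) t3) t4) r1) (trivial_modD r2 r3)) jac) => v.
rewrite /rel_poly (dotted_max BA) (dotted_max CB) (dotted_max CA)
  (comm_poly_overlap _ _ _ _ (pvec (is_dotted A) (letter_bracket A C))).
by rewrite /jacobiator !pvecD; ring.
Qed.

Lemma thm_set_inclusion f g wf wg u u' : GS f -> GS g -> lead f wf -> lead g wg ->
  wf = u ++ wg ++ u' -> [/\ u = [::], u' = [::] & f = g].
Proof.
move=> Sf Sg /(thm_set_leadP Sf) lf /(thm_set_leadP Sg) lg.
case: lf lg => [[x _ [-> ->]]|[p [q [_ ap aq -> ->]]]] [[y X0y [-> ->]]|[p' [q' [_ _ _ -> ->]]]] E.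
- have [uE u'E] : u = [::] /\ u' = [::] by apply: (cat_size_id (v := [:: inl y])); rewrite -E.
  by move: E; rewrite uE u'E => -[->].
- by have := congr1 size E; rewrite !size_cat /=; lia.
- have : inl y \in [:: p; q] by rewrite E !mem_cat mem_seq1 eqxx orbT.
  by rewrite !inE => /orP[] /eqP pE; [move: ap | move: aq]; rewrite -pE /= X0y.
- have [uE u'E] : u = [::] /\ u' = [::] by apply: (cat_size_id (v := [:: p'; q'])); rewrite -E.
  by move: E; rewrite uE u'E => -[-> ->].
Qed.

Lemma thm_set_intersection f g wf wg (a b c : word) : GS f -> GS g -> lead f wf -> lead g wg ->
  a != [::] -> b != [::] -> c != [::] -> wf = a ++ b -> wg = b ++ c ->
  trivial_mod GS (psub (pmulw [::] f c) (pmulw a g [::])) (a ++ b ++ c).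
Proof.
move=> Sf Sg /(thm_set_leadP Sf) lf /(thm_set_leadP Sg) lg na nb nc.
case: lf => [[x _ [_ ->]] /(congr1 size)|[A [B [BA aA aB -> ->]]] /esym Ea].
  by have := cat_nonnil_size na nb => /[swap] <-.
case: lg => [[x _ [_ ->]] /(congr1 size)|[B' [C [CB aB' aC -> ->]]] /esym Eb].
  by have := cat_nonnil_size nb nc => /[swap] <-.
have [-> bB] := cat_nonnil_pair na nb Ea.
have [bB' ->] := cat_nonnil_pair nb nc Eb.
move: bB'; rewrite bB => -[BB']; subst B'.
exact: trivial_mod_overlap.
Qed.

Lemma thm_set_GSB : is_GSB GS.
Proof.
split=> [f|f g wf wg Sf Sg lf lg]; first exact: thm_set_monic.
split=> [u u' E|a b c na nb nc Ea Eb]; last exact: thm_set_intersection Ea Eb.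
have [-> -> <-] := thm_set_inclusion Sf Sg lf lg E.
by apply: trivial_mod_eq0 => v; rewrite /psub pmulw_nil subrr.
Qed.
End GroebnerShirshov.

Theorem theorem5p3 (k : fieldType) (L : lmodType k) (vd dv pp : L -> L -> L)
  (d : Order.disp_t) (X : orderType d) (e : X -> L) (X0 : pred X) :
  (2%N \notin [pchar k]%R) ->
  is_lie_trialgebra vd dv pp ->
  is_basis_of e (fun _ => True) predT ->
  is_basis_of e (in_L0 vd dv pp) X0 ->
  is_GSB (thm_set dv pp e X0).
Proof. exact: thm_set_GSB. Qed.
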